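(* Let $R$ be a commutative ring with identity, let $S$ and $T$ be multiplicative subsets of $R$, and let $M$ be a unitary $R$-module. Then: (1) If $A$ is an $R_T$-submodule of $M_T$, then $A=L_T$ for some $R$-submodule $L$ of $M$. (2) If $M$ is an $S$-Noetherian $R$-module, then $M_T$ is an $S_T$-Noetherian $R_T$-module. Furthermore, if $T$ consists of regular elements of $R$, then $M_T$ is an $S$-Noetherian $R_T$-module.
   Context: $S_T=\{s/t\mid s\in S,\ t\in T\}$, a multiplicative subset of $R_T$. A submodule $L$ of a module $M$ is $S$-finite if there exist $s\in S$ and a finitely generated submodule $F$ of $M$ with $Ls\subseteq F\subseteq L$; $M$ is $S$-Noetherian if every submodule of $M$ is $S$-finite. When $T$ consists of regular elements, $R$ is regarded as a subring of $R_T$, so $S$ is a multiplicative subset of $R_T$. *)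

From HB Require Import structures.
From mathcomp Require Import all_boot all_algebra.
Set Implicit Arguments. Unset Strict Implicit. Unset Printing Implicit Defensive.
Import GRing.Theory.
Local Open Scope ring_scope.

Definition multiplicative (R : comPzRingType) (S : {pred R}) : Prop :=
  1 \in S /\ (forall a b, a \in S -> b \in S -> a * b \in S).

Definition submodule (R : comPzRingType) (M : lmodType R) (L : M -> Prop) : Prop :=
  [/\ L 0, (forall x y, L x -> L y -> L (x + y)) & (forall (r : R) x, L x -> L (r *: x))].

Definition span (R : comPzRingType) (M : lmodType R) (ms : seq M) : M -> Prop :=
  fun m => exists cs : seq R, size cs = size ms /\
                    m = \sum_(i < size ms) cs`_i *: ms`_i.

Definition S_finite (R : comPzRingType) (M : lmodType R) (S : {pred R}) (L : M -> Prop) : Prop :=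
  exists2 s, s \in S &
    exists ms : seq M, (forall m, span ms m -> L m) /\ (forall m, L m -> span ms (s *: m)).

Definition S_noetherian (R : comPzRingType) (M : lmodType R) (S : {pred R}) : Prop :=
  forall L : M -> Prop, submodule L -> S_finite S L.

(** An element m/t of M_T is represented by a pair (m, t) : M * R with t \in T;
   an element r/u of R_T by a pair (r, u) : R * R with u \in T.
   (m,t) and (m',t') represent the same element iff u (t' m - t m') = 0
   for some u \in T.  Subsets of M_T are Prop-predicates on pairs that only
   hold for valid pairs and are invariant under this equivalence. *)

Definition frac_equiv (R : comPzRingType) (M : lmodType R) (T : {pred R})
  (x y : M * R) : Prop :=
  exists2 u, u \in T & u *: (y.2 *: x.1 - x.2 *: y.1) = 0.

(** m/t + m'/t' = (t' m + t m')/(t t') *)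
Definition fadd (R : comPzRingType) (M : lmodType R) (x y : M * R) : M * R :=
  (y.2 *: x.1 + x.2 *: y.1, x.2 * y.2).

(** (r/u) (m/t) = (r m)/(u t) *)
Definition fscale (R : comPzRingType) (M : lmodType R) (c : R * R) (x : M * R) : M * R :=
  (c.1 *: x.1, c.2 * x.2).

Definition loc_submodule (R : comPzRingType) (M : lmodType R) (T : {pred R})
  (A : M * R -> Prop) : Prop :=
  [/\ (forall x, A x -> x.2 \in T),
      (forall x y, y.2 \in T -> A x -> frac_equiv T x y -> A y),
      A (0, 1),
      (forall x y, A x -> A y -> A (fadd x y)) &
      (forall (c : R * R) x, c.2 \in T -> A x -> A (fscale c x))].

Definition loc_of (R : comPzRingType) (M : lmodType R) (T : {pred R})
  (L : M -> Prop) : M * R -> Prop :=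
  fun x => x.2 \in T /\ exists l t, [/\ L l, t \in T & frac_equiv T x (l, t)].

Definition loc_span (R : comPzRingType) (M : lmodType R) (T : {pred R})
  (xs : seq (M * R)) : M * R -> Prop :=
  fun x => x.2 \in T /\
    exists cs : seq (R * R), [/\ size cs = size xs, all (fun c => c.2 \in T) cs &
      frac_equiv T x (foldr (@fadd R M) (0, 1)
                        [seq fscale cx.1 cx.2 | cx <- zip cs xs])].

(** A (subset of M_T) is D-finite, where D is a set of elements of R_T given
    by representative pairs: A d ⊆ F ⊆ A for some d in D and finitely
    generated R_T-submodule F of M_T. *)
Definition loc_finite (R : comPzRingType) (M : lmodType R) (T : {pred R})
  (D : R * R -> Prop) (A : M * R -> Prop) : Prop :=
  exists2 d, D d &
    exists xs : seq (M * R), [/\ all (fun x => x.2 \in T) xs,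
      (forall x, loc_span T xs x -> A x) &
      (forall x, A x -> loc_span T xs (fscale d x))].

Definition loc_noetherian (R : comPzRingType) (M : lmodType R) (T : {pred R})
  (D : R * R -> Prop) : Prop :=
  forall A : M * R -> Prop, loc_submodule T A -> loc_finite T D A.

Definition S_loc (R : comPzRingType) (S T : {pred R}) : R * R -> Prop :=
  fun d => d.1 \in S /\ d.2 \in T.

(** S viewed inside R_T via s |-> s/1 *)
Definition S_in_loc (R : comPzRingType) (S : {pred R}) : R * R -> Prop :=
  fun d => d.1 \in S /\ d.2 = 1.

Definition regular_set (R : comPzRingType) (T : {pred R}) : Prop :=
  forall t, t \in T -> forall r : R, t * r = 0 -> r = 0.

From Pilot Require Import Defs.
From mathcomp Require Import all_boot all_algebra.

Set Implicit Arguments.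
Unset Strict Implicit.
Unset Printing Implicit Defensive.
Local Open Scope ring_scope.

(* Every R_T-submodule A of M_T is the localization of its contraction
   L = { m | m/1 \in A }: an element m/t of A gives m/1 = (t/1)(m/t) in A.
   If L s ⊆ F = <m_1, ..., m_n> ⊆ L, then the fractions m_i/1 generate an
   R_T-submodule of A containing (s/1) A, since s m/t = (sum c_i m_i)/t
   = sum (c_i/t)(m_i/1). *)

Section Localization.

(* Imported locally: GRing.Theory.multiplicative would shadow Defs.multiplicative
   in the statement of lemma2p1. *)
Import GRing.Theory.

Variables (R : comPzRingType) (M : lmodType R) (T : {pred R}).
Hypothesis T1 : 1 \in T.

Definition contraction (A : M * R -> Prop) : M -> Prop := fun m => A (m, 1).

Definition unit_fracs (ms : seq M) : seq (M * R) := [seq (m, 1) | m <- ms].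

Definition loc_combination (cs : seq (R * R)) (xs : seq (M * R)) : M * R :=
  foldr (@fadd R M) (0, 1) [seq fscale cx.1 cx.2 | cx <- zip cs xs].

Lemma frac_equiv_cross (x y : M * R) :
  y.2 *: x.1 = x.2 *: y.1 -> frac_equiv T x y.
Proof. by move=> exy; exists 1; rewrite // exy subrr scaler0. Qed.

Lemma span_mem (ms : seq M) m : m \in ms -> Defs.span ms m.
Proof.
move=> /(nthP 0)[i lt_i_ms <-].
exists [seq (i == j)%:R | j <- iota 0 (size ms)]; rewrite size_map size_iota.
split=> //; rewrite (bigD1 (Ordinal lt_i_ms)) //= big1 ?addr0.
  by rewrite (nth_map 0%N) ?size_iota // nth_iota // eqxx scale1r.
move=> j ne_ji; rewrite (nth_map 0%N) ?size_iota // nth_iota // add0n.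
suff /negPf -> : i != j :> nat by rewrite scale0r.
by rewrite eq_sym; exact: ne_ji.
Qed.

Lemma loc_combination_unit_fracs t (cs : seq R) (ms : seq M) :
  size cs = size ms ->
  let F := loc_combination [seq (c, t) | c <- cs] (unit_fracs ms) in
  F.2 = t ^+ size ms /\ t *: F.1 = t ^+ size ms *: \sum_(i < size ms) cs`_i *: ms`_i.
Proof.
rewrite /loc_combination; elim: ms cs => [|m ms IH] [|c cs] //= => [_|[size_cs]].
  by rewrite big_ord0 expr0 !scaler0.
have [-> IH1] := IH cs size_cs; rewrite mulr1 -exprS; split=> //.
by rewrite big_ord_recl !scalerDr IH1 !scalerA -!exprS.
Qed.

Section Submodule.

Variable A : M * R -> Prop.
Hypothesis locA : loc_submodule T A.

Lemma loc_submodule_den x : A x -> x.2 \in T.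
Proof. by case: locA => den _ _ _ _; apply: den. Qed.

Lemma loc_submodule_equiv x y : A x -> frac_equiv T x y -> y.2 \in T -> A y.
Proof. by case: locA => _ equiv _ _ _ Ax xy Ty; apply: equiv Ax xy. Qed.

Lemma loc_submodule_contraction m t : A (m, t) -> contraction A m.
Proof.
move=> Amt; have [_ _ _ _ AZ] := locA.
apply: (loc_submodule_equiv (AZ (t, 1) _ T1 Amt)) => //.
by apply: frac_equiv_cross; rewrite /fscale /= mul1r scale1r.
Qed.

Lemma contraction_submodule : submodule (contraction A).
Proof.
have [_ _ A0 AD AZ] := locA; split=> [|x y Ax Ay|r x Ax]; rewrite /contraction //.
  apply: (loc_submodule_equiv (AD _ _ Ax Ay)) => //.
  by apply: frac_equiv_cross; rewrite /fadd /fscale /= mul1r !scale1r.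
apply: (loc_submodule_equiv (AZ (r, 1) _ T1 Ax)) => //.
by apply: frac_equiv_cross; rewrite /fadd /fscale /= mul1r !scale1r.
Qed.

Lemma loc_of_contraction x : x.2 \in T -> A x <-> loc_of T (contraction A) x.
Proof.
case: x => m t /= Tt; split=> [Amt | [_ [l [u [Al Tu [v Tv equiv_lu]]]]]].
  split=> //; exists m, t; split=> //; first exact: loc_submodule_contraction Amt.
  exact: frac_equiv_cross.
have [_ _ _ _ AZ] := locA; apply: (loc_submodule_equiv (AZ (1, u) _ Tu Al)) => //.
by exists v; rewrite //= scale1r mulr1 -opprB scalerN equiv_lu oppr0.
Qed.

Lemma loc_submodule_combination cs xs :
  all (fun c => c.2 \in T) cs -> {in xs, forall x, A x} -> A (loc_combination cs xs).
Proof.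
have [_ _ A0 AD AZ] := locA; elim: xs cs => [|x xs IH] [|c cs] //= /andP[Tc Tcs] Axs.
apply: AD; first by apply: AZ Tc (Axs _ (mem_head _ _)).
by apply: IH Tcs _ => y xs_y; apply: Axs; rewrite inE xs_y orbT.
Qed.

Lemma loc_span_sub xs : {in xs, forall x, A x} -> forall x, loc_span T xs x -> A x.
Proof.
move=> Axs x [Tx [cs [_ Tcs [u Tu equiv_x]]]].
apply: (loc_submodule_equiv (loc_submodule_combination Tcs Axs)) => //.
by exists u; rewrite // -opprB scalerN equiv_x oppr0.
Qed.

End Submodule.

Lemma span_loc_span (ms : seq M) m t :
  t \in T -> Defs.span ms m -> loc_span T (unit_fracs ms) (m, t).
Proof.
move=> Tt [cs [size_cs ->]]; split=> //.
exists [seq (c, t) | c <- cs]; rewrite !size_map all_map; split=> //.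
  exact/allP.
have [F2 F1] := loc_combination_unit_fracs t size_cs.
by exists t; rewrite //= F2 F1 subrr scaler0.
Qed.

Lemma loc_finite_of_S_finite (S : {pred R}) (D : R * R -> Prop) A :
  (forall s, s \in S -> D (s, 1)) -> loc_submodule T A ->
  S_finite S (contraction A) -> loc_finite T D A.
Proof.
move=> DS locA [s Ss [ms [span_sub sub_span]]]; exists (s, 1); first exact: DS.
exists (unit_fracs ms); split.
- by rewrite all_map; apply/allP.
- apply: loc_span_sub => // _ /mapP[m ms_m ->].
  exact/span_sub/span_mem.
- case=> m t Amt; rewrite /fscale /= mul1r.
  apply: span_loc_span (loc_submodule_den locA Amt) _.
  exact/sub_span/(loc_submodule_contraction locA Amt).
Qed.

Lemma S_noetherian_loc (S : {pred R}) (D : R * R -> Prop) :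
  (forall s, s \in S -> D (s, 1)) -> @S_noetherian R M S -> @loc_noetherian R M T D.
Proof.
move=> DS noethM A locA; apply: (loc_finite_of_S_finite DS locA).
exact: noethM (contraction_submodule locA).
Qed.

End Localization.

Theorem lemma2p1 (R : comPzRingType) (S T : {pred R}) (M : lmodType R)
  (hS : multiplicative S) (hT : multiplicative T) :
  (forall A : M * R -> Prop, loc_submodule T A ->
     exists2 L : M -> Prop, submodule L &
       forall x : M * R, x.2 \in T -> (A x <-> loc_of T L x)) /\
  (@S_noetherian R M S ->
     @loc_noetherian R M T (S_loc S T) /\
     (regular_set T -> @loc_noetherian R M T (S_in_loc S))).
Proof.
have [T1 _] := hT; split.
  move=> A locA; exists (contraction A); first exact: (contraction_submodule T1 locA).
  exact: (loc_of_contraction T1 locA).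
move=> noethM; split; last move=> _.
all: by apply: S_noetherian_loc noethM => // s Ss; split.
Qed.
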